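(* Let $N \ge 1$ be the sample size, $K$ the data dimension and $J$ an integer with $1 \le J < K$. Let $\delta_1 > \delta_2 > \cdots > \delta_K > 0$ be the eigenvalues of the sample variance-covariance matrix ${\bf S}_x = \frac{1}{N}\sum_{i=1}^N {\bf x}_i {\bf x}_i^\prime$ of (mean-centred) data ${\bf x}_1,\ldots,{\bf x}_N \in \mathbb{R}^K$, and let $$\hat{\tau}_{\rm ML} = \frac{1}{K-J}\sum_{j=J+1}^K \delta_j .$$ For $\tau = \sigma^2$ with $0 < \tau < \delta_J$, consider the concentrated codelength $$\mathcal{I}(\tau) = \frac{N(K-J) - KJ}{2}\log \tau + \frac{N}{2\tau}\sum_{j=1}^K \delta_j - \frac{N}{2\tau}\sum_{j=1}^J (\delta_j - \tau) + \frac{K-J+1}{2}\sum_{j=1}^J \log(\delta_j - \tau).$$ Then $\mathcal{I}$ has $(J+1)$ stationary points whose locations are the roots of the degree $n = J+1$ polynomial $$a_n \tau^n + a_{n-1}\tau^{n-1} + \cdots + a_1 \tau + a_0, \qquad (0 < \tau < \delta_J),$$ with coefficients $$a_0 = -\hat{\tau}_{\rm ML}\, e_J,$$ $$a_j = (-1)^{j+1}\left[\hat{\tau}_{\rm ML}\, e_{J-j} + \left(1 - \frac{(j-1)(J-1)}{N(K-J)} - \frac{K(J-j+1)}{N(K-J)}\right) e_{J-j+1}\right], \quad (1 \le j \le J),$$ $$a_n = (-1)^J\left[1 - \frac{J(J-1)}{N(K-J)}\right],$$ where $e_t = e_t(\delta_1,\ldots,\delta_J)$ denotes the $t$-th elementary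 symmetric polynomial in the $J$ variables $\delta_1,\ldots,\delta_J$ (with $e_0 = 1$). The MML estimate $\hat{\sigma}^2_{\rm MML}$ of the residual variance is the stationary point in the domain $0 < \tau < \delta_J$ that yields the smallest value of $\mathcal{I}$, and the MML estimates of the factor lengths are $\hat{\alpha}_j = (\delta_j - \hat{\sigma}^2_{\rm MML})^{1/2}$ for $j = 1,\ldots,J$.
   Context: Setting: the probabilistic PCA model ${\bf x}_i \sim N_K({\bf 0}, {\bf A}{\bf A}^\prime + \sigma^2 {\bf I}_K)$, $i=1,\ldots,N$, with factor load matrix ${\bf A} \in \mathbb{R}^{K\times J}$ having mutually orthogonal columns of lengths $\alpha_1,\ldots,\alpha_J$ and residual variance $\sigma^2>0$. The function $\mathcal{I}(\tau)$ above is the minimum message length (MML87) codelength of this model, up to additive constants, after the factor orientations have been set to the top $J$ eigenvectors of ${\bf S}_x$ and the factor lengths to $\alpha_j^2 = \delta_j - \sigma^2$; it is a function of $\tau=\sigma^2$ only. $\hat{\tau}_{\rm ML}$ is the maximum likelihood estimate of the residual variance. The paper assumes throughout that the eigenvalues of ${\bf S}_x$ are distinct and positive, ordered $\delta_1 > \cdots > \delta_K > 0$. *)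

From HB Require Import structures.
From mathcomp Require Import all_boot all_order all_algebra.
From mathcomp Require Import all_classical all_reals all_analysis.
Set Implicit Arguments. Unset Strict Implicit. Unset Printing Implicit Defensive.
Import Order.TTheory GRing.Theory Num.Theory.
Import numFieldNormedType.Exports.
Local Open Scope ring_scope.

(* Eigenvalues are indexed 1..K: d 1, ..., d K. *)

Definition esym {R : comNzRingType} (d : nat -> R) (J t : nat) : R :=
  \sum_(s : {set 'I_J} | #|s| == t) \prod_(i in s) d (val i).+1.

Definition sample_cov {R : fieldType} (N K : nat) (x : 'I_N -> 'cV[R]_K)
  : 'M[R]_K := (N%:R)^-1 *: \sum_(i < N) (x i *m (x i)^T).

Definition tau_ML {R : fieldType} (K J : nat) (d : nat -> R) : R :=
  ((K - J)%:R)^-1 * \sum_(J.+1 <= j < K.+1) d j.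

Definition codelen {R : realType} (N K J : nat) (d : nat -> R) (tau : R) : R :=
  ((N * (K - J))%:R - (K * J)%:R) / 2 * ln tau
  + N%:R / (2 * tau) * \sum_(1 <= j < K.+1) d j
  - N%:R / (2 * tau) * \sum_(1 <= j < J.+1) (d j - tau)
  + (K - J + 1)%:R / 2 * \sum_(1 <= j < J.+1) ln (d j - tau).

Definition mml_coef {R : fieldType} (N K J : nat) (d : nat -> R) (j : nat) : R :=
  let tML := tau_ML K J d in
  let D := (N * (K - J))%:R in
  if j == 0%N then - (tML * esym d J J)
  else if j == J.+1 then (-1) ^+ J * (1 - (J * (J - 1))%:R / D)
  else (-1) ^+ j.+1 *
       (tML * esym d J (J - j)
        + (1 - ((j - 1) * (J - 1))%:R / D - (K * (J - j + 1))%:R / D)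
          * esym d J (J - j + 1)).

Definition mml_poly {R : fieldType} (N K J : nat) (d : nat -> R) : {poly R} :=
  \poly_(j < J.+2) mml_coef N K J d j.

Definition stationary {R : realType} (f : R -> R) (tau : R) : Prop :=
  derivable f tau 1 /\ derive1 f tau = 0.

(* Let q(tau) = prod_(j <= J) (tau - delta_j).  For tau > 0 the codelength is
   a ln tau + b / tau + const + c * sum_(j <= J) ln (delta_j - tau), so
   2 tau^2 q(tau) I'(tau) is the polynomial
     (N(K-J) - KJ) X q - N(K-J) tau_ML q + (K-J+1) X^2 q'
   evaluated at tau.  By Vieta the coefficients of q are signed elementary
   symmetric polynomials of delta_1, ..., delta_J, and comparing coefficients
   shows that this polynomial is N(K-J) (-1)^J times the polynomial of the
   theorem.  As q(tau) <> 0 for tau < delta_J <= delta_j, the stationary points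
   are exactly its roots. *)

From Pilot Require Import Defs.
From mathcomp Require Import all_boot all_order all_algebra.
From mathcomp Require Import all_classical all_reals all_analysis.
From mathcomp Require Import ring zify.
Import Order.TTheory GRing.Theory Num.Theory.
Local Open Scope ring_scope.

Definition top_eigen_poly {R : comNzRingType} (d : nat -> R) (J : nat) : {poly R} :=
  \prod_(1 <= j < J.+1) ('X - (d j)%:P).

Section TopEigenPoly.
Variable R : comNzRingType.
Implicit Types (d : nat -> R) (J k : nat).

Lemma coef_top_eigen_poly d J k : (k <= J)%N ->
  (top_eigen_poly d J)`_k = (-1) ^+ (J - k) * Defs.esym d J (J - k).
Proof.
move=> kJ; rewrite /top_eigen_poly -(big_map d xpredT (fun p => 'X - p%:P)).
have sz : size [seq d j | j <- index_iota 1 J.+1] = J.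
  by rewrite size_map size_iota subSS subn0.
rewrite coef_prod_XsubC sz //; congr (_ * _).
apply: eq_bigr => s _; apply: eq_bigr => i _.
by rewrite (nth_map 0%N) ?nth_iota ?size_iota ?subSS ?subn0.
Qed.

Lemma coef_top_eigen_poly_lead d J : (top_eigen_poly d J)`_J = 1.
Proof.
rewrite -(lead_coef_prod_XsubC (index_iota 1 J.+1) xpredT d) lead_coefE.
by rewrite size_prod_XsubC size_iota subSS subn0.
Qed.

Lemma coef_top_eigen_poly_gt d J k : (J < k)%N -> (top_eigen_poly d J)`_k = 0.
Proof.
by move=> Jk; rewrite nth_default // size_prod_XsubC size_iota subSS subn0.
Qed.

End TopEigenPoly.

Lemma horner_top_eigen_poly_neq0 {R : idomainType} {d : nat -> R} {J : nat} {t : R} :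
  (forall j, (1 <= j <= J)%N -> d j != t) -> (top_eigen_poly d J).[t] != 0.
Proof.
move=> dt; rewrite horner_prod prodf_seq_neq0; apply/allP => j.
by rewrite mem_index_iota hornerXsubC subr_eq0 eq_sym => /dt.
Qed.

Lemma horner_deriv_prod_XsubC (R : fieldType) (I : eqType) (r : seq I)
    (F : I -> R) (x : R) : {in r, forall i, F i != x} ->
  (\prod_(i <- r) ('X - (F i)%:P))^`().[x] =
  (\prod_(i <- r) ('X - (F i)%:P)).[x] * \sum_(i <- r) (x - F i)^-1.
Proof.
elim: r => [|i r IH] Fx; first by rewrite !big_nil derivC horner0 mulr0.
rewrite !big_cons derivM hornerD !hornerM IH; last first.
  by move=> j rj; apply: Fx; rewrite in_cons rj orbT.
have xFi : x - F i != 0 by rewrite subr_eq0 eq_sym Fx ?mem_head.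
by rewrite derivXsubC hornerXsubC hornerC; field.
Qed.

Lemma mml_polyE (R : fieldType) (N K J : nat) (d : nat -> R) : (J <= K)%N ->
  let q := top_eigen_poly d J in let D := (N * (K - J))%:R : R in
  (-1) ^+ J *: mml_poly N K J d =
  (1 - (K * J)%:R / D) *: ('X * q) - tau_ML K J d *: q
  + ((K - J + 1)%:R / D) *: ('X^2 * q^`()).
Proof.
move=> JK q D; apply/polyP => i.
rewrite coefZ coef_poly coefD coefB !coefZ expr2 -mulrA !coefXM.
case: i => [|j]; first by rewrite /mml_coef /= coef_top_eigen_poly // subn0; ring.
have coefXderiv : (if j == 0%N then 0 else q^`()`_j.-1) = q`_j *+ j.
  by case: j => [|j] //=; rewrite coef_deriv.
rewrite coefXderiv /mml_coef /=.
have [jJ|Jj|->] := ltngtP j J.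
- have [m defJ] : exists m, J = (m + j.+1)%N by exists (J - j.+1)%N; rewrite subnK.
  rewrite !ltnS (ltnW jJ) eqSS (ltn_eqF jJ) !coef_top_eigen_poly // 1?ltnW //.
  rewrite {}/D; move: JK; rewrite {}defJ => JK.
  have -> : (m + j.+1 - j = m.+1)%N by lia.
  have -> : (m + j.+1 - j.+1 = m)%N by lia.
  have -> : (m + j.+1 - 1 = m + j)%N by lia.
  have sgn : (-1) ^+ (m + j.+1) * (-1) ^+ j.+2 = - (-1) ^+ m :> R.
    rewrite -exprD (_ : (m + j.+1 + j.+2 = m.+1 + 2 * j.+1)%N); last by lia.
    by rewrite exprD exprM sqrrN !expr1n mulr1 exprS mulN1r.
  rewrite subn1 /= addn1 mulrA sgn [(-1) ^+ m.+1]exprS.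
  rewrite !natrM !natrD (natrB _ JK) !natrD; ring.
- rewrite !ltnS leqNgt Jj /= !coef_top_eigen_poly_gt //; last exact: ltnW.
  ring.
- rewrite ltnSn eqxx coef_top_eigen_poly_lead coef_top_eigen_poly_gt //.
  have natJJ1 : (J * (J - 1))%:R = J%:R * (J%:R - 1) :> R.
    case: J {JK q D coefXderiv} => [|J]; first by rewrite mul0r.
    by rewrite natrM subSS subn0 -addn1 natrD addrK.
  rewrite mulrA -expr2 sqrr_sign mul1r natJJ1 {}/D !natrM !natrD (natrB _ JK); ring.
Qed.

Lemma decreasing_seq_le {R : numDomainType} {d : nat -> R} {K i j : nat} :
    (forall k, (1 <= k < K)%N -> d k.+1 < d k) -> (1 <= i <= j)%N -> (j <= K)%N ->
  d j <= d i.
Proof.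
move=> d_decr /andP[i0 ij] jK.
apply: (homo_leq_in (D := [pred k | 0 < k <= K]%N) (r := fun a b => b <= a)) => //.
- by move=> b a c ba cb; exact: le_trans cb ba.
- by move=> a b /andP[a0 _] /andP[_ bK] k /andP[ak kb]; apply/andP; lia.
- by move=> k /andP[k0 _] /andP[_ kK]; apply/ltW/d_decr; lia.
- by apply/andP; lia.
- by apply/andP; lia.
Qed.

Section CodelenDerivative.
Context {R : realType}.

Lemma is_derive_ln_sub (c t : R) : t < c ->
  is_derive t 1 (fun u => ln (c - u)) (t - c)^-1.
Proof.
move=> tc.
have dsub : is_derive t 1 (fun u : R => c - u) (0 - 1) by exact: is_deriveB.
have dln : is_derive (c - t) 1 (@ln R) (c - t)^-1.
  by apply: is_derive1_ln; rewrite subr_gt0.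
have := is_derive1_comp (g := fun u => c - u) dln dsub.
by rewrite sub0r mulrN1 -invrN opprB.
Qed.

Lemma is_derive_sum_ln_sub (I : eqType) (r : seq I) (F : I -> R) (t : R) :
  {in r, forall i, t < F i} ->
  is_derive t 1 (fun u => \sum_(i <- r) ln (F i - u)) (\sum_(i <- r) (t - F i)^-1).
Proof.
move=> tF; rewrite -(fct_sumE r xpredT (fun i u => ln (F i - u))) !big_seq.
by apply: big_ind2 => i /tF; exact: is_derive_ln_sub.
Qed.

Lemma codelenE (N K J : nat) (d : nat -> R) (u : R) : (J <= K)%N -> u != 0 ->
  codelen N K J d u =
  ((N * (K - J))%:R - (K * J)%:R) / 2 * ln u
  + N%:R / (2 * u) * \sum_(J.+1 <= j < K.+1) d j + (N * J)%:R / 2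
  + (K - J + 1)%:R / 2 * \sum_(1 <= j < J.+1) ln (d j - u).
Proof.
move=> JK u0; rewrite /codelen (@big_cat_nat _ _ _ J.+1) //=.
by rewrite sumrB sumr_const_nat subSS subn0 -[u *+ J]mulr_natr !natrM; field.
Qed.

Lemma is_derive_codelen (N K J : nat) (d : nat -> R) (t : R) :
    (J <= K)%N -> 0 < t -> (forall j, (1 <= j <= J)%N -> t < d j) ->
  is_derive t 1 (codelen N K J d)
    (((N * (K - J))%:R - (K * J)%:R) / (2 * t)
     - N%:R / (2 * t ^+ 2) * \sum_(J.+1 <= j < K.+1) d j
     + (K - J + 1)%:R / 2 * \sum_(1 <= j < J.+1) (t - d j)^-1).
Proof.
move=> JK t0 td.
have tn0 : t != 0 by rewrite gt_eqF.
have dln : is_derive t 1 (@ln R) t^-1 := is_derive1_ln t0.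
have dinv : is_derive t 1 (fun u : R => u^-1) (- t ^- 2).
  by have := is_deriveV (f := id) tn0 (is_derive_id t 1); rewrite /= scaler1.
have dsum : is_derive t 1 (fun u => \sum_(1 <= j < J.+1) ln (d j - u))
    (\sum_(1 <= j < J.+1) (t - d j)^-1).
  by apply: is_derive_sum_ln_sub => j; rewrite mem_index_iota; exact: td.
pose a : R := ((N * (K - J))%:R - (K * J)%:R) / 2.
pose b : R := N%:R / 2 * \sum_(J.+1 <= j < K.+1) d j.
pose e : R := (K - J + 1)%:R / 2.
(* dln, dinv and dsum are found by typeclass resolution. *)
have dcl : is_derive t 1
    (fun u : R => a * ln u + b * u^-1 + (N * J)%:R / 2
                  + e * \sum_(1 <= j < J.+1) ln (d j - u))
    (a *: t^-1 + b *: (- t ^- 2) + 0 + e *: \sum_(1 <= j < J.+1) (t - d j)^-1).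
  exact: is_deriveD.
apply: near_eq_is_derive (is_derive_eq dcl _).
- apply: filterS (lt_nbhsr t0) => u u0.
  by rewrite codelenE ?gt_eqF // /a /b /e; field; rewrite gt_eqF.
- by rewrite /a /b /e /GRing.scale /=; field.
Qed.

Lemma is_derive_codelen_mml_poly (N K J : nat) (d : nat -> R) (t : R) :
    (0 < N)%N -> (J < K)%N -> 0 < t -> (forall j, (1 <= j <= J)%N -> t < d j) ->
  is_derive t 1 (codelen N K J d)
    ((N * (K - J))%:R * ((-1) ^+ J * (mml_poly N K J d).[t])
     / (2 * t ^+ 2 * (top_eigen_poly d J).[t])).
Proof.
move=> N0 JK t0 td; apply: is_derive_eq (is_derive_codelen N K J d t (ltnW JK) t0 td) _.
have dt : forall j, (1 <= j <= J)%N -> d j != t by move=> j /td /gt_eqF ->.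
have dq : (top_eigen_poly d J)^`().[t] =
    (top_eigen_poly d J).[t] * \sum_(1 <= j < J.+1) (t - d j)^-1.
  by apply: horner_deriv_prod_XsubC => j; rewrite mem_index_iota; exact: dt.
have q0 := horner_top_eigen_poly_neq0 dt.
rewrite -hornerZ mml_polyE ?(ltnW JK) //.
rewrite !hornerD ?hornerN !hornerZ !hornerM !hornerX dq /tau_ML.
have KJ0 : (K - J)%:R != 0 :> R by rewrite pnatr_eq0 -lt0n subn_gt0.
have N0' : N%:R != 0 :> R by rewrite pnatr_eq0 -lt0n.
by rewrite !natrM; field; rewrite q0 KJ0 N0' gt_eqF.
Qed.

End CodelenDerivative.

Lemma stationary_is_derive {R : realType} {f : R -> R} {t df : R} :
  is_derive t 1 f df -> stationary f t <-> df = 0.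
Proof.
move=> fdf; rewrite /stationary derive1E derive_val.
by split=> [[]//|->]; split=> //; exact: ex_derive.
Qed.

Theorem theorem1 (R : realType) (N K J : nat) (x : 'I_N -> 'cV[R]_K)
  (d : nat -> R) :
  (1 <= N)%N -> (1 <= J)%N -> (J < K)%N ->
  (forall i, (1 <= i < K)%N -> d i.+1 < d i) -> 0 < d K ->
  char_poly (sample_cov x) = \prod_(1 <= i < K.+1) ('X - (d i)%:P) ->
  forall tau : R, 0 < tau < d J ->
    (stationary (codelen N K J d) tau <-> (mml_poly N K J d).[tau] = 0).
Proof.
move=> N0 _ JK d_decr _ _ t /andP[t0 tdJ].
have td : forall j, (1 <= j <= J)%N -> t < d j.
  by move=> j jJ; exact: lt_le_trans tdJ (decreasing_seq_le d_decr jJ (ltnW JK)).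
rewrite (stationary_is_derive (is_derive_codelen_mml_poly N K J d t N0 JK t0 td)).
have q0 : (top_eigen_poly d J).[t] != 0.
  by apply: horner_top_eigen_poly_neq0 => j /td /gt_eqF ->.
have D0 : (N * (K - J))%:R != 0 :> R.
  by rewrite pnatr_eq0 muln_eq0 negb_or -!lt0n subn_gt0 N0.
split=> [/eqP|->]; last by rewrite !mulr0 mul0r.
rewrite mulf_eq0 invr_eq0 !mulf_eq0 (negbTE D0) (negbTE q0) signr_eq0 (gt_eqF t0).
by rewrite pnatr_eq0 /= orbF => /eqP.
Qed.
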